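(* Let $k,m\in\mathbb{N}$ with $m<k\le 2m$, $k$ even, and $\gcd(2k+1,2(2m+1))=1$; let $a>0$ satisfy $\frac{1}{4km+3k+m+1}\le\frac{a}{2k+1}\le\frac{1}{4km+k+3m+1}$. For $s=0,\dots,4m+1$, $n=0,\dots,2k$ define $X_{sn}=\frac{s}{2(2m+1)}-\frac{n}{2k+1}$, $\Phi_{sn}=\sum_{l\in\mathbb{Z}}Q_2\big(2a(2m+1)(l+X_{sn})\big)$ with $Q_2(x)=(1-|x|)\chi_{[-1,1]}(x)$, and $A_{sn}=\Phi_{sn}-\Phi_{s,2k+1-n}$ for $n=1,\dots,k$. Then $A_{mn}=A_{m+1,n}$ for all $n=1,\dots,k$. *)

From Stdlib Require Import Reals Lra Lia ZArith Arith.
From Coquelicot Require Import Coquelicot.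
Open Scope R_scope.

Definition Q2 (x : R) : R :=
  if Rle_dec (Rabs x) 1 then 1 - Rabs x else 0.

(* Bilateral sum over l in Z: sum over l >= 0 plus sum over l <= -1.
   (For the summands used below only finitely many terms are nonzero.) *)
Definition sumZ (f : Z -> R) : R :=
  Series (fun l : nat => f (Z.of_nat l)) +
  Series (fun l : nat => f (- Z.of_nat (S l))%Z).

Definition Xsn (k m s n : nat) : R :=
  INR s / (2 * (2 * INR m + 1)) - INR n / (2 * INR k + 1).

Definition Phi (k m : nat) (a : R) (s n : nat) : R :=
  sumZ (fun l => Q2 (2 * a * (2 * INR m + 1) * (IZR l + Xsn k m s n))).

Definition Asn (k m : nat) (a : R) (s n : nat) : R :=
  Phi k m a s n - Phi k m a s (2 * k + 1 - n)%nat.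

(* Write c = 2a(2m+1) and P(x) = sum_l Q2(c(l + x)), so that Phi_{sn} = P(X_{sn}) and P is
   even.  Since X_{m+1,n} = -(X_{m,2k+1-n} + 1/2) and X_{m+1,2k+1-n} = -(X_{m,n} + 1/2),
   the claim becomes P(y) + P(y + 1/2) = P(y') + P(y' + 1/2) for y = X_{mn}, y' = X_{m,2k+1-n}.
   The bounds on a say exactly that c(1 - d) <= 2 <= c(1 + d) with d = (k-m)/((2m+1)(2k+1)), and
   then P(y) + P(y + 1/2) = 2 - c/2 as soon as 2y is at distance at least d from the integers:
   of the hats Q2(c(x - j/2)), j in Z, only two meet y, both on their linear parts.  Finally
   (2m+1)(2k+1) 2X_{mn} is, for every n, an integer congruent to -(k-m) modulo 2m+1,
   which keeps 2X_{mn} at distance at least d from the integers. *)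
From Stdlib Require Import Reals Lra Lia ZArith Arith.
From Coquelicot Require Import Coquelicot.
Open Scope R_scope.

Lemma Series_finite (f : nat -> R) (N : nat) :
  (forall n, (N < n)%nat -> f n = 0) -> Series f = sum_n f N.
Proof.
  intros Hf. unfold Series.
  rewrite (Lim_seq_ext_loc _ (fun _ => sum_n f N)).
  - now rewrite Lim_seq_const.
  - exists N. intros n Hn. induction n as [|n IH].
    + now replace N with 0%nat by lia.
    + destruct (Nat.eq_dec N (S n)) as [<-|HN]; [reflexivity|].
      rewrite sum_Sn, IH, Hf by lia. unfold plus; simpl; ring.
Qed.

Lemma Q2_opp x : Q2 (- x) = Q2 x.
Proof. unfold Q2. now rewrite Rabs_Ropp. Qed.

Lemma Q2_nonneg_arg x : 0 <= x <= 1 -> Q2 x = 1 - x.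
Proof.
  intros Hx. unfold Q2. rewrite Rabs_pos_eq by lra. destruct (Rle_dec x 1); lra.
Qed.

Lemma Q2_nonpos_arg x : -1 <= x <= 0 -> Q2 x = 1 + x.
Proof.
  intros Hx. unfold Q2. rewrite Rabs_left1 by lra. destruct (Rle_dec (- x) 1); lra.
Qed.

Lemma Q2_ge1 x : 1 <= x -> Q2 x = 0.
Proof.
  intros Hx. unfold Q2. rewrite Rabs_pos_eq by lra. destruct (Rle_dec x 1); lra.
Qed.

Lemma Q2_le_m1 x : x <= -1 -> Q2 x = 0.
Proof. intros Hx. rewrite <- Q2_opp. apply Q2_ge1. lra. Qed.

Definition Q2_sum3 (c x : R) : R := Q2 (c * (x - 1)) + Q2 (c * x) + Q2 (c * (x + 1)).

Lemma sumZ_Q2_scaled c x : 1 < c -> -1 < x < 1 ->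
  sumZ (fun l => Q2 (c * (IZR l + x))) = Q2_sum3 c x.
Proof.
  intros Hc Hx. unfold sumZ, Q2_sum3.
  rewrite (Series_finite _ 1), (Series_finite _ 0).
  - rewrite sum_Sn, !sum_O. unfold plus. simpl. rewrite Rplus_0_l.
    replace (1 + x) with (x + 1) by ring. replace (-1 + x) with (x - 1) by ring. ring.
  - intros n Hn. rewrite opp_IZR, <- INR_IZR_INZ. apply Q2_le_m1.
    assert (2 <= INR (S n)) by (apply (le_INR 2); lia). nra.
  - intros n Hn. rewrite <- INR_IZR_INZ. apply Q2_ge1.
    assert (2 <= INR n) by (apply (le_INR 2); lia). nra.
Qed.

Lemma Q2_sum3_opp c x : Q2_sum3 c (- x) = Q2_sum3 c x.
Proof.
  unfold Q2_sum3.
  replace (c * (- x - 1)) with (- (c * (x + 1))) by ring.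
  replace (c * (- x)) with (- (c * x)) by ring.
  replace (c * (- x + 1)) with (- (c * (x - 1))) by ring.
  rewrite !Q2_opp. ring.
Qed.

Ltac Q2_linear :=
  repeat match goal with |- context [Q2 ?x] =>
    first [ rewrite (Q2_le_m1 x) by nra | rewrite (Q2_ge1 x) by nra
          | rewrite (Q2_nonneg_arg x) by nra | rewrite (Q2_nonpos_arg x) by nra ] end;
  lra.

Lemma Q2_sum3_add_half c d y (t : Z) :
  0 < c -> 0 <= d -> c * (1 - d) <= 2 <= c * (1 + d) -> -1 < y < / 2 ->
  IZR t + d <= 2 * y <= IZR t + 1 - d ->
  Q2_sum3 c y + Q2_sum3 c (y + / 2) = 2 - c / 2.
Proof.
  intros Hc Hd [Hlo Hhi] Hy [Ht1 Ht2].
  assert (Ht : (-3 < t < 1)%Z) by (split; apply lt_IZR; lra).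
  unfold Q2_sum3.
  assert (t = -2 \/ t = -1 \/ t = 0)%Z as [-> | [-> | ->]] by lia; Q2_linear.
Qed.

Lemma mod_far_from_zero (p j q N : Z) :
  (0 < q)%Z -> (q | N)%Z -> (0 < N)%Z -> (0 <= j)%Z -> (2 * j <= q)%Z -> (q | p + j)%Z ->
  (j <= p mod N <= N - j)%Z.
Proof.
  intros Hq [w ->] HN Hj Hjq Hdiv.
  pose proof (Z.mod_pos_bound p (w * q) HN) as Hr.
  assert (Hdiv' : (q | p mod (w * q) + j)%Z).
  { replace (p mod (w * q) + j)%Z with (p + j - p / (w * q) * w * q)%Z
      by (rewrite Z.mod_eq by lia; ring).
    apply Z.divide_sub_r; [exact Hdiv | apply Z.divide_factor_r]. }
  destruct Hdiv' as [s Hs].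
  assert (0 <= s)%Z by nia.
  assert (s <= w)%Z by nia.
  split; [destruct (Z.eq_dec s 0) |]; nia.
Qed.

Lemma ratio_far_from_Z (p j N : Z) :
  (0 < N)%Z -> (j <= p mod N <= N - j)%Z ->
  exists t : Z, IZR t + IZR j / IZR N <= IZR p / IZR N <= IZR t + 1 - IZR j / IZR N.
Proof.
  intros HN [Hlo Hhi]. exists (p / N)%Z.
  pose proof (Z.div_mod p N ltac:(lia)) as Hp.
  apply IZR_lt in HN. apply IZR_le in Hlo, Hhi. rewrite minus_IZR in Hhi.
  assert (Hr : IZR p / IZR N = IZR (p / N) + IZR (p mod N) / IZR N).
  { rewrite Hp at 1. rewrite plus_IZR, mult_IZR. field. lra. }
  rewrite Hr. split.
  - apply Rplus_le_compat_l, Rmult_le_compat_r; [left; apply Rinv_0_lt_compat|]; lra.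
  - replace (IZR (p / N) + 1 - IZR j / IZR N) with (IZR (p / N) + (IZR N - IZR j) / IZR N)
      by (field; lra).
    apply Rplus_le_compat_l, Rmult_le_compat_r; [left; apply Rinv_0_lt_compat|]; lra.
Qed.

Definition margin (k m : nat) : R :=
  (INR k - INR m) / ((2 * INR m + 1) * (2 * INR k + 1)).

Lemma margin_nonneg k m : (m <= k)%nat -> 0 <= margin k m.
Proof.
  intros Hmk. apply le_INR in Hmk. assert (0 <= INR m) by apply pos_INR.
  unfold margin. apply Rdiv_le_0_compat; nra.
Qed.

Lemma two_Xsn_ratio k m s n :
  2 * Xsn k m s n
  = IZR (Z.of_nat s * (2 * Z.of_nat k + 1) - 2 * Z.of_nat n * (2 * Z.of_nat m + 1))
    / IZR ((2 * Z.of_nat m + 1) * (2 * Z.of_nat k + 1)).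
Proof.
  unfold Xsn.
  repeat rewrite ?minus_IZR, ?plus_IZR, ?mult_IZR. rewrite <- !INR_IZR_INZ.
  assert (0 <= INR m) by apply pos_INR. assert (0 <= INR k) by apply pos_INR.
  field. lra.
Qed.

Lemma two_Xsn_far_from_Z k m n : (m < k <= 2 * m)%nat ->
  exists t : Z, IZR t + margin k m <= 2 * Xsn k m m n <= IZR t + 1 - margin k m.
Proof.
  intros Hkm.
  set (j := (Z.of_nat k - Z.of_nat m)%Z).
  set (N := ((2 * Z.of_nat m + 1) * (2 * Z.of_nat k + 1))%Z).
  assert (Hmargin : margin k m = IZR j / IZR N).
  { unfold margin, j, N. repeat rewrite ?minus_IZR, ?plus_IZR, ?mult_IZR.
    now rewrite <- !INR_IZR_INZ. }
  rewrite Hmargin, two_Xsn_ratio. fold N.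
  apply ratio_far_from_Z; [unfold N; lia|].
  apply (mod_far_from_zero _ _ (2 * Z.of_nat m + 1)); unfold j, N; try lia.
  - apply Z.divide_factor_l.
  - exists (Z.of_nat k - 2 * Z.of_nat n)%Z. ring.
Qed.

Lemma Xsn_range k m s n : (s < 2 * m + 1)%nat -> (n < 2 * k + 1)%nat ->
  -1 < Xsn k m s n < / 2.
Proof.
  intros Hs Hn. unfold Xsn.
  apply lt_INR in Hs, Hn. rewrite plus_INR, mult_INR in Hs, Hn. simpl INR in Hs, Hn.
  assert (0 <= INR s) by apply pos_INR. assert (0 <= INR n) by apply pos_INR.
  assert (0 < 2 * (2 * INR m + 1)) by lra. assert (0 < 2 * INR k + 1) by lra.
  assert (INR s / (2 * (2 * INR m + 1)) < / 2)
    by (apply Rmult_lt_reg_r with (2 * (2 * INR m + 1)); [lra|]; field_simplify; lra).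
  assert (INR n / (2 * INR k + 1) < 1)
    by (apply Rmult_lt_reg_r with (2 * INR k + 1); [lra|]; field_simplify; lra).
  assert (0 <= INR s / (2 * (2 * INR m + 1))) by (apply Rdiv_le_0_compat; lra).
  assert (0 <= INR n / (2 * INR k + 1)) by (apply Rdiv_le_0_compat; lra).
  lra.
Qed.

Lemma Xsn_succ_reflect k m n : (n <= 2 * k + 1)%nat ->
  Xsn k m (m + 1) n = - (Xsn k m m (2 * k + 1 - n) + / 2).
Proof.
  intros Hn. unfold Xsn.
  rewrite minus_INR, !plus_INR, mult_INR by exact Hn. simpl INR.
  assert (0 <= INR m) by apply pos_INR. assert (0 <= INR k) by apply pos_INR.
  field. lra.
Qed.

Lemma scale_window (k m : nat) (a : R) : (m < k)%nat -> 0 < a ->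
  1 / INR (4 * k * m + 3 * k + m + 1) <= a / INR (2 * k + 1) ->
  a / INR (2 * k + 1) <= 1 / INR (4 * k * m + k + 3 * m + 1) ->
  let c := 2 * a * (2 * INR m + 1) in
  1 < c /\ c * (1 - margin k m) <= 2 <= c * (1 + margin k m).
Proof.
  intros Hmk Ha H1 H2 c.
  assert (INR m + 1 <= INR k) by (rewrite <- S_INR; apply le_INR; lia).
  rewrite !plus_INR, !mult_INR, !INR_1 in H1, H2.
  rewrite (INR_IZR_INZ 2), (INR_IZR_INZ 3), (INR_IZR_INZ 4) in H1, H2. simpl Z.of_nat in H1, H2.
  assert (0 <= INR m) by apply pos_INR.
  set (M := INR m) in *. set (K := INR k) in *.
  set (al := a / (2 * K + 1)) in *.
  assert (Hal : 0 < al) by (unfold al; apply Rdiv_lt_0_compat; lra).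
  assert (Hc : c = 2 * al * ((2 * M + 1) * (2 * K + 1))) by (unfold c, al; field; lra).
  set (D1 := 4 * K * M + 3 * K + M + 1) in *.
  set (D2 := 4 * K * M + K + 3 * M + 1) in *.
  assert (1 <= al * D1).
  { apply Rmult_le_reg_r with (/ D1); [apply Rinv_0_lt_compat; unfold D1; nra|].
    replace (al * D1 * / D1) with al by (field; unfold D1; nra). lra. }
  assert (al * D2 <= 1).
  { apply Rmult_le_reg_r with (/ D2); [apply Rinv_0_lt_compat; unfold D2; nra|].
    replace (al * D2 * / D2) with al by (field; unfold D2; nra). lra. }
  assert (Hlo : c * (1 - margin k m) = 2 * (al * D2))
    by (rewrite Hc; unfold margin, D2; fold M K; field; lra).
  assert (Hhi : c * (1 + margin k m) = 2 * (al * D1))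
    by (rewrite Hc; unfold margin, D1; fold M K; field; lra).
  split; [|lra].
  assert (al * (K - M) < al * ((2 * M + 1) * (2 * K + 1)))
    by (apply Rmult_lt_compat_l; nra).
  rewrite Hc. unfold D1 in *. nra.
Qed.

Theorem lemma3p13 (k m : nat) (a : R) :
  (m < k <= 2 * m)%nat ->
  Nat.Even k ->
  Nat.gcd (2 * k + 1) (2 * (2 * m + 1)) = 1%nat ->
  0 < a ->
  1 / INR (4 * k * m + 3 * k + m + 1) <= a / INR (2 * k + 1) ->
  a / INR (2 * k + 1) <= 1 / INR (4 * k * m + k + 3 * m + 1) ->
  forall n : nat, (1 <= n <= k)%nat ->
    Asn k m a m n = Asn k m a (m + 1) n.
Proof.
  intros Hkm _ _ Ha Hlo Hhi n Hn.
  pose proof (scale_window k m a ltac:(lia) Ha Hlo Hhi) as Hwin. cbv zeta in Hwin.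
  pose proof (margin_nonneg k m ltac:(lia)) as Hd.
  unfold Asn, Phi. set (c := 2 * a * (2 * INR m + 1)) in *.
  rewrite (Xsn_succ_reflect k m n), (Xsn_succ_reflect k m (2 * k + 1 - n)) by lia.
  replace (2 * k + 1 - (2 * k + 1 - n))%nat with n by lia.
  set (y := Xsn k m m n). set (y' := Xsn k m m (2 * k + 1 - n)).
  assert (Hy : -1 < y < / 2) by (apply Xsn_range; lia).
  assert (Hy' : -1 < y' < / 2) by (apply Xsn_range; lia).
  rewrite !sumZ_Q2_scaled, !Q2_sum3_opp by lra.
  destruct (two_Xsn_far_from_Z k m n Hkm) as [t Ht].
  destruct (two_Xsn_far_from_Z k m (2 * k + 1 - n) Hkm) as [t' Ht'].
  pose proof (Q2_sum3_add_half c (margin k m) y t ltac:(lra) Hd ltac:(lra) Hy Ht).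
  pose proof (Q2_sum3_add_half c (margin k m) y' t' ltac:(lra) Hd ltac:(lra) Hy' Ht').
  lra.
Qed.
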